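(* Let $P>0$. For any code $\mathcal{C}\subset\mathcal{B}^n(\sqrt{nP})$, there exist $\varepsilon>0$ with $\varepsilon\to0$ as $|\mathcal{C}|\to\infty$, an increasing function $f(\cdot)$, a constant $0<d<4P$ and a subcode $\mathcal{C}'\subseteq\mathcal{C}$ of size at least $f(|\mathcal{C}|)$ such that $\|x_i-x_j\|_2\in\left[\sqrt{n(d-\varepsilon)},\sqrt{n(d+\varepsilon)}\right]$ for all distinct $x_i,x_j\in\mathcal{C}'$.
   Context: $\mathcal{B}^n(r)$ is the closed Euclidean ball in $\mathbb{R}^n$ of radius $r$ centered at the origin; a code is a finite subset. Here $\varepsilon$ depends only on $|\mathcal{C}|$ (and $P$) and $f$ does not depend on $n$ or $\mathcal{C}$. *)

From HB Require Import structures.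
From mathcomp Require Import all_boot all_order all_algebra.
From mathcomp Require Import finmap.
From mathcomp Require Import reals.
Set Implicit Arguments. Unset Strict Implicit. Unset Printing Implicit Defensive.
Import Order.TTheory GRing.Theory Num.Theory.
Local Open Scope ring_scope.

Definition enorm (R : realType) (n : nat) (x : 'rV[R]_n) : R :=
  Num.sqrt (\sum_(i < n) x 0 i ^+ 2).

Definition in_ball (R : realType) (n : nat) (r : R) (x : 'rV[R]_n) : Prop :=
  enorm x <= r.

From HB Require Import structures.
From mathcomp Require Import all_boot all_order all_algebra.
From mathcomp Require Import finmap.
From mathcomp Require Import reals.
From mathcomp Require Import zify ring lra.
Set Implicit Arguments. Unset Strict Implicit. Unset Printing Implicit Defensive.
Import Order.TTheory GRing.Theory Num.Theory.
Local Open Scope ring_scope.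

(* Normalised squared distances |x - y|^2 / n of points of the ball lie in [0, 4P];
   cutting this interval into k = t + 2 bands of width 4P/k colours the pairs of the
   code with k colours.  A greedy choice gives a sequence of length k t in which every
   point sees all later points in a single colour (possible once k^(k t) <= |C| + 1),
   and pigeonhole on these colours leaves t points whose pairwise distances lie in one
   band.  Choosing t as large as |C| permits, t grows without bound, so the half band
   width eps = 2P/k tends to 0. *)

Section Pigeonhole.
Local Open Scope nat_scope.
Variables (T : eqType) (h : T -> nat) (k : nat).

Lemma sum_count_eq_size (s : seq T) : all (fun x => h x < k) s ->
  \sum_(j < k) count (fun x => h x == j) s = size s.
Proof.
elim: s => [|x s IHs] /=; first by rewrite big1.
case/andP => hx /IHs <-; rewrite big_split /= (bigD1 (Ordinal hx)) //= eqxx.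
by rewrite big1 // => j /negbTE; rewrite -val_eqE eq_sym => ->.
Qed.

Lemma pigeonhole_count (s : seq T) : 0 < k -> all (fun x => h x < k) s ->
  exists2 j, j < k & size s <= k * count (fun x => h x == j) s.
Proof.
move=> k_gt0 hs; pose F (j : 'I_k) := count (fun x => h x == j) s.
have [|j0 Fj0] := @bigop.eq_bigmax _ F; first by rewrite card_ord.
exists j0 => //; rewrite -[k in k * _]card_ord -sum_nat_const -(sum_count_eq_size hs).
by rewrite -/(F j0) -Fj0; apply: leq_sum => j _; apply: bigop.leq_bigmax.
Qed.

End Pigeonhole.

Section ForwardColoring.
Local Open Scope nat_scope.
Variables (T : eqType) (c : T -> T -> nat).

Fixpoint forward_colored (h : T -> nat) (s : seq T) : bool :=
  if s is x :: s' then all (fun y => c x y == h x) s' && forward_colored h s' else true.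

Lemma eq_forward_colored h h' s :
  {in s, h =1 h'} -> forward_colored h s = forward_colored h' s.
Proof.
elim: s => //= x s IHs hh'; rewrite hh' ?mem_head // IHs // => y ys.
by apply: hh'; rewrite inE ys orbT.
Qed.

Hypothesis cC : forall x y, c x y = c y x.

Lemma forward_colored_monochromatic h s j : forward_colored h s ->
  {in [seq z <- s | h z == j] &, forall x y, x != y -> c x y = j}.
Proof.
elim: s => //= a s IHs /andP[/allP ca cs] x y.
case: ifP => [/eqP haj|_]; last exact: IHs cs x y.
rewrite !inE => /predU1P[-> | xs] /predU1P[-> | ys]; rewrite ?eqxx // => xy.
- by move: ys; rewrite mem_filter => /andP[_ /ca /eqP->].
- by rewrite cC; move: xs; rewrite mem_filter => /andP[_ /ca /eqP->].
- exact: IHs cs x y xs ys xy.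
Qed.

Variable k : nat.
Hypotheses (k_gt1 : 1 < k) (c_lt : forall x y, c x y < k).

Lemma forward_colored_subseq m (S : seq T) : uniq S -> k ^ m <= (size S).+1 ->
  exists s h, [/\ uniq s, {subset s <= S}, size s = m,
                  all (fun x => h x < k) s & forward_colored h s].
Proof.
elim: m S => [|m IHm] S uS szS; first by exists [::], (fun _ => 0).
case: S uS szS => [|x S] /=; first by rewrite leqNgt -[1]/(k ^ 0) ltn_exp2l.
case/andP => xS uS szS.
have cx_lt : all (fun y => c x y < k) S by apply/allP => y _.
have [j jk cnt] := @pigeonhole_count _ (c x) k S (ltnW k_gt1) cx_lt.
pose S' := [seq y <- S | c x y == j].
have szS' : k ^ m <= (size S').+1.
  rewrite -(leq_pmul2l (ltnW k_gt1)) size_filter -expnS mulnS; lia.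
have [s [h [us sS' sz hk hs]]] := IHm S' (filter_uniq _ uS) szS'.
have sS : {subset s <= S} by move=> y /sS'; rewrite mem_filter => /andP[].
have xs : x \notin s by apply: contra xS => /sS.
have hx : {in s, (fun z => if z == x then j else h z) =1 h}.
  by move=> y ys; case: eqP => // yx; rewrite -yx ys in xs.
exists (x :: s), (fun z => if z == x then j else h z); split.
- by rewrite /= xs us.
- by move=> y /predU1P[-> | /sS ys]; rewrite inE ?eqxx ?ys ?orbT.
- by rewrite /= sz.
- by rewrite /= eqxx jk; apply/allP => y ys; rewrite hx // (allP hk).
- rewrite /= eqxx (eq_forward_colored hx) hs andbT.
  by apply/allP => y /sS'; rewrite mem_filter => /andP[].
Qed.

Lemma ramsey_monochromatic t (S : seq T) : uniq S -> k ^ (k * t) <= (size S).+1 ->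
  exists2 j, j < k & exists L, [/\ uniq L, {subset L <= S}, t <= size L &
    {in L &, forall x y, x != y -> c x y = j}].
Proof.
move=> uS szS; have [s [h [us sS sz hk hs]]] := forward_colored_subseq uS szS.
have [j jk cnt] := @pigeonhole_count _ h k s (ltnW k_gt1) hk.
exists j => //; exists [seq z <- s | h z == j]; split.
- exact: filter_uniq.
- by move=> y; rewrite mem_filter => /andP[_ /sS].
- by rewrite size_filter -(leq_pmul2l (ltnW k_gt1)) -sz.
- exact: forward_colored_monochromatic.
Qed.

End ForwardColoring.

Section RamseySize.
Local Open Scope nat_scope.

Definition ramsey_bound (t : nat) : nat := t.+2 ^ (t.+2 * t).

Definition ramsey_size (M : nat) : nat :=
  \max_(t < M.+2 | ramsey_bound t <= M.+1) t.

Lemma ltn_ramsey_bound t : t < ramsey_bound t.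
Proof. by rewrite (leq_ltn_trans (leq_pmull t _) (ltn_expl _ _)). Qed.

Lemma ramsey_size_max t M : ramsey_bound t <= M.+1 -> t <= ramsey_size M.
Proof.
move=> tM; have ltM : t < M.+2 := leq_trans (ltn_ramsey_bound t) (leqW tM).
exact: (bigop.leq_bigmax_cond (Ordinal ltM)).
Qed.

Lemma ramsey_bound_size M : ramsey_bound (ramsey_size M) <= M.+1.
Proof.
apply: (big_ind (fun t => ramsey_bound t <= M.+1)) => // t u.
by rewrite /maxn; case: ltnP.
Qed.

Lemma ramsey_size_homo : {homo ramsey_size : M N / M <= N}.
Proof. by move=> M N MN; apply/ramsey_size_max/(leq_trans (ramsey_bound_size M)). Qed.

End RamseySize.

Section Quantization.
Variable R : archiRealFieldType.

Definition band_index (k : nat) (w u : R) : nat := minn k.-1 (Num.truncn (u / w)).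

Lemma band_index_lt k w u : (0 < k)%N -> (band_index k w u < k)%N.
Proof. by rewrite /band_index; lia. Qed.

Lemma band_index_bounds k w u : 0 < w -> 0 <= u -> u <= k%:R * w ->
  (band_index k w u)%:R * w <= u <= (band_index k w u).+1%:R * w.
Proof.
move=> w_gt0 u_ge0 ukw; have /andP[qu uq] := truncn_itv (divr_ge0 u_ge0 (ltW w_gt0)).
rewrite ler_pdivlMr // ltr_pdivrMr // in qu uq.
rewrite /band_index; move: qu uq; set q := Num.truncn (u / w) => qu uq.
case: k ukw => [|k] /= ukw.
  by rewrite min0n mul0r mul1r u_ge0 (le_trans ukw) // mul0r ltW.
case: (leqP q k) => [_ | /ltnW kq]; first by rewrite qu ltW.
by rewrite ukw (le_trans _ qu) // ler_pM2r // ler_nat.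
Qed.

Lemma band_index_scaled_bounds (n k : nat) (w S : R) : 0 < w -> 0 <= S ->
  S <= n%:R * (k%:R * w) ->
  n%:R * ((band_index k w (S / n%:R))%:R * w) <= S
    <= n%:R * ((band_index k w (S / n%:R)).+1%:R * w).
Proof.
move=> w_gt0 S_ge0; case: (posnP n) => [-> | n_gt0].
  by rewrite !mul0r => S_le0; rewrite S_ge0 S_le0.
have n_pos : 0 < n%:R :> R by rewrite ltr0n.
have u_ge0 : 0 <= S / n%:R by rewrite divr_ge0 ?ler0n.
set u := S / n%:R in u_ge0 *; have -> : S = n%:R * u by rewrite /u mulrC divfK ?gt_eqF.
by rewrite !ler_pM2l //; apply: band_index_bounds.
Qed.

End Quantization.

Section BandParameters.
Variable R : archiRealFieldType.

Definition band_radius (P : R) (M : nat) : R := 2 * P / (ramsey_size M).+2%:R.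

Lemma band_radius_gt0 P M : 0 < P -> 0 < band_radius P M.
Proof. by move=> P_gt0; rewrite divr_gt0 ?mulr_gt0 ?ltr0n. Qed.

Lemma band_radius_vanishing P e : 0 < e ->
  exists N, forall M, (N <= M)%N -> band_radius P M < e.
Proof.
move=> e_gt0; set t := Num.bound `|2 * P / e|.
exists (ramsey_bound t) => M /leqW /ramsey_size_max tM.
have tb : 2 * P / e < t%:R.
  exact: le_lt_trans (ler_norm _) (archi_boundP (normr_ge0 _)).
rewrite /band_radius ltr_pdivrMr ?ltr0n // -ltr_pdivrMl // (mulrC e^-1).
by rewrite (lt_le_trans tb) // ler_nat !leqW.
Qed.

Lemma band_radius_width P M : (ramsey_size M).+2%:R * (2 * band_radius P M) = 4 * P.
Proof. by rewrite /band_radius; field; rewrite lt0r_neq0 // ltr_wpDr ?ler0n. Qed.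

(* The term 1/(M+1) only makes the step function ramsey_size strictly increasing. *)
Definition code_size_bound (M : nat) : R := (ramsey_size M)%:R - M.+1%:R^-1.

Lemma code_size_bound_le M : code_size_bound M <= (ramsey_size M)%:R.
Proof. by rewrite lerBlDr lerDl invr_ge0 ler0n. Qed.

Lemma code_size_bound_increasing : {homo code_size_bound : a b / (a < b)%N >-> a < b}.
Proof.
move=> a b ab; apply: ler_ltB; first by rewrite ler_nat ramsey_size_homo // ltnW.
by rewrite ltf_pV2 ?posrE ?ltr0n // ltr_nat ltnS.
Qed.

Lemma code_size_bound_unbounded K :
  exists N, forall M, (N <= M)%N -> K <= code_size_bound M.
Proof.
set t := Num.bound (`|K| + 1).
exists (ramsey_bound t) => M /leqW /ramsey_size_max tM.
have Kt : `|K| + 1 < t%:R by apply: archi_boundP; rewrite addr_ge0.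
have tg : t%:R <= (ramsey_size M)%:R :> R by rewrite ler_nat.
have iM : M.+1%:R^-1 <= 1 :> R by rewrite invf_le1 ?ler1n ?ltr0n.
rewrite /code_size_bound lerBrDr (le_trans (lerD (ler_norm K) iM)) //.
exact: le_trans (ltW Kt) tg.
Qed.

End BandParameters.

Local Open Scope fset_scope.

Section Geometry.
Variables (R : realType) (n : nat).

Definition sqdist (x y : 'rV[R]_n) : R := \sum_(i < n) (x - y) 0 i ^+ 2.

Lemma sqdistC x y : sqdist x y = sqdist y x.
Proof. by apply: eq_bigr => i _; rewrite !mxE -sqrrN opprB. Qed.

Lemma sqdist_ge0 x y : 0 <= sqdist x y.
Proof. by apply: sumr_ge0 => i _; apply: sqr_ge0. Qed.

Lemma sqdist_ball r x y : in_ball r x -> in_ball r y -> sqdist x y <= 4 * r ^+ 2.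
Proof.
have sq_enorm (z : 'rV[R]_n) : \sum_(i < n) z 0 i ^+ 2 = enorm z ^+ 2.
  by rewrite /enorm sqr_sqrtr // sumr_ge0 // => i _; apply: sqr_ge0.
have enorm_ball (z : 'rV[R]_n) : in_ball r z -> enorm z ^+ 2 <= r ^+ 2.
  by move=> zr; rewrite ler_sqr ?nnegrE ?sqrtr_ge0 // (le_trans _ zr) ?sqrtr_ge0.
move=> /enorm_ball xr /enorm_ball yr.
apply: (@le_trans _ _ (2 * (enorm x ^+ 2 + enorm y ^+ 2))); last lra.
rewrite -!sq_enorm -big_split /= mulr_sumr; apply: ler_sum => i _; rewrite !mxE.
have := sqr_ge0 (x 0 i + y 0 i); nra.
Qed.

Lemma equidistant_subcode k t (w : R) (C : {fset 'rV[R]_n}) :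
  0 < w -> (1 < k)%N -> (k ^ (k * t) <= #|` C|.+1)%N ->
  {in C &, forall x y, sqdist x y <= n%:R * (k%:R * w)} ->
  exists2 j, (j < k)%N & exists C' : {fset 'rV[R]_n},
    [/\ C' `<=` C, (t <= #|` C'|)%N &
         {in C' &, forall x y, x != y ->
            n%:R * (j%:R * w) <= sqdist x y <= n%:R * (j.+1%:R * w)}].
Proof.
move=> w_gt0 k_gt1 szC diamC.
pose c x y := band_index k w (sqdist x y / n%:R).
have c_lt x y : (c x y < k)%N by apply/band_index_lt/ltnW.
have cC x y : c x y = c y x by rewrite /c sqdistC.
have [j jk [L [uL LC tL monoL]]] := ramsey_monochromatic cC k_gt1 c_lt (fset_uniq C) szC.
exists j => //; exists [fset x in L]; split.
- by apply/fsubsetP => x; rewrite inE => /LC.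
- by rewrite card_fseq undup_id.
- move=> x y; rewrite !inE => xL yL xy; rewrite -(monoL x y xL yL xy).
  exact: band_index_scaled_bounds (sqdist_ge0 x y) (diamC x y (LC x xL) (LC y yL)).
Qed.

End Geometry.

Theorem mainTheorem14 (R : realType) (P : R) (hP : 0 < P) :
  exists eps : nat -> R,
    (forall M, 0 < eps M) /\
    (forall e : R, 0 < e -> exists N : nat, forall M : nat, (N <= M)%N -> eps M < e) /\
  exists f : nat -> R,
    (forall a b : nat, (a < b)%N -> f a < f b) /\
    (forall K : R, exists N : nat, forall M : nat, (N <= M)%N -> K <= f M) /\
  forall (n : nat) (C : {fset 'rV[R]_n}),
    (forall x, x \in C -> in_ball (Num.sqrt (n%:R * P)) x) ->
    exists d : R, 0 < d /\ d < 4 * P /\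
    exists C' : {fset 'rV[R]_n},
      C' `<=` C /\ f #|` C| <= (#|` C'|)%:R /\
      forall x y, x \in C' -> y \in C' -> x != y ->
        Num.sqrt (n%:R * (d - eps #|` C|)) <= enorm (x - y) /\
        enorm (x - y) <= Num.sqrt (n%:R * (d + eps #|` C|)).
Proof.
exists (band_radius P); split; first by move=> M; apply: band_radius_gt0.
split; first exact: band_radius_vanishing.
exists (@code_size_bound R); split; first exact: code_size_bound_increasing.
split; first exact: code_size_bound_unbounded.
move=> n C inC; set t := ramsey_size #|` C|; set eps := band_radius P #|` C|.
have eps_gt0 : 0 < eps by apply: band_radius_gt0.
have width : t.+2%:R * (2 * eps) = 4 * P := band_radius_width P #|` C|.
have diamC : {in C &, forall x y, sqdist x y <= n%:R * (t.+2%:R * (2 * eps))}.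
  move=> x y xC yC; rewrite width mulrCA -[n%:R * P]sqr_sqrtr.
    exact: sqdist_ball (inC x xC) (inC y yC).
  by rewrite mulr_ge0 // ltW.
have [j jt [C' [C'C tC' distC']]] := @equidistant_subcode R n t.+2 t _ C
  (mulr_gt0 (ltr0Sn R 1) eps_gt0) isT (ramsey_bound_size _) diamC.
exists ((2 * j%:R + 1) * eps); split; first by rewrite mulr_gt0 // ltr_wpDl ?mulr_ge0.
split.
  rewrite -width mulrA ltr_pM2r //.
  have : j.+1%:R <= t.+2%:R :> R by rewrite ler_nat.
  rewrite -natr1; lra.
exists C'; split=> //; split.
  by rewrite (le_trans (code_size_bound_le R _)) ?ler_nat.
have d_lo : (2 * j%:R + 1) * eps - eps = j%:R * (2 * eps) by ring.
have d_hi : ((2 * j%:R + 1) * eps + eps)%R = j.+1%:R * (2 * eps) by rewrite -natr1; ring.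
move=> x y xC' yC' xy; have /andP[lo hi] := distC' x y xC' yC' xy.
by rewrite /enorm d_lo d_hi; split; apply: ler_wsqrtr.
Qed.
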